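(* Let $G$ be a connected bipartite simple graph with $m$ edges. Then \[ \mathscr{K}_e(G)\ge 2m-\frac32, \] with equality if and only if $G$ is complete bipartite.
   Context: Kemeny's constant of an irreducible finite Markov chain with transition matrix $P$ whose eigenvalues (with multiplicity) are $1=\rho_1,\rho_2,\dots,\rho_N$ (with $1$ simple) is $\mathscr{K}(P)=\sum_{i=2}^{N}\frac{1}{1-\rho_i}$. $\mathscr{K}_e(G)$ is Kemeny's constant of the simple random walk on the arcs of $G$ (ordered pairs $(u,v)$ with $\{u,v\}$ an edge), where from $(u,v)$ one moves to $(v,w)$ with probability $1/\deg(v)$ for each neighbor $w$ of $v$. *)

From HB Require Import structures.
From mathcomp Require Import all_boot all_order all_algebra all_field.
Set Implicit Arguments. Unset Strict Implicit. Unset Printing Implicit Defensive.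
Import Order.TTheory GRing.Theory Num.Theory.
Local Open Scope ring_scope.

Definition eigenvalues (n : nat) (P : 'M[algC]_n) : seq algC :=
  sval (closed_field_poly_normal (char_poly P)).

(* Kemeny's constant: sum over eigenvalues rho_2..rho_N (i.e. all eigenvalues
   with one copy of the eigenvalue 1 removed) of 1/(1 - rho_i). *)
Definition kemeny (n : nat) (P : 'M[algC]_n) : algC :=
  \sum_(r <- rem 1 (eigenvalues P)) (1 - r)^-1.

Definition simple_graph (T : finType) (e : rel T) : Prop :=
  symmetric e /\ irreflexive e.

Definition connected_graph (T : finType) (e : rel T) : Prop :=
  forall x y : T, connect e x y.

Definition bipartite (T : finType) (e : rel T) : Prop :=
  exists c : T -> bool, forall x y, e x y -> c x != c y.

Definition complete_bipartite (T : finType) (e : rel T) : Prop :=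
  exists c : T -> bool, forall x y, e x y = (c x != c y).

Definition deg (T : finType) (e : rel T) (v : T) : nat := #|[set w | e v w]|.

Definition nedges (T : finType) (e : rel T) : nat :=
  #|[set E : {set T} | [exists u, exists v, e u v && (E == [set u; v])]]|.

Definition arc (T : finType) (e : rel T) := {a : T * T | e a.1 a.2}.

Definition arc_walk (T : finType) (e : rel T) : 'M[algC]_#|{: arc e}| :=
  \matrix_(i, j)
    let a := val (enum_val i : arc e) in
    let b := val (enum_val j : arc e) in
    if a.2 == b.1 then ((deg e a.2)%:R)^-1 else 0.

Definition kemeny_e (T : finType) (e : rel T) : algC := kemeny (arc_walk e).

(* The walk on arcs factors as [P = X Y], where [X] (arcs x vertices) and [Y]
   (vertices x arcs) record heads and tails of arcs scaled by [1 / sqrt deg];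
   [Y X] is the normalized adjacency matrix [S = D^-1/2 A D^-1/2].  Hence [P]
   has the spectrum of [S] plus [2m - n] zeros.  Writing
   [1/(1 - l) = 1 + l + l^2/(1 - l)], using [tr S = 0] and the simplicity of
   the eigenvalue 1 (connectedness), gives [K_e = 2m - 2 + sum l^2/(1 - l)]
   over the eigenvalues of [S].  For a bipartite graph [-1] is an eigenvalue
   contributing [1/2]; every other term is nonnegative since [l <= 1], and they
   all vanish iff [tr S^2 = sum_{x~y} 1/(d_x d_y)] equals 2.  Finally this sum
   minus 2 is a weighted sum of squares that vanishes exactly on complete
   bipartite graphs. *)

From HB Require Import structures.
From mathcomp Require Import all_boot all_order all_algebra all_field.
From mathcomp Require Import ring.
Import Order.TTheory GRing.Theory Num.Theory.
Local Open Scope ring_scope.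
Set Implicit Arguments. Unset Strict Implicit. Unset Printing Implicit Defensive.

Lemma sum_enum_val (V : nmodType) (I : finType) (F : I -> V) :
  \sum_(i < #|I|) F (enum_val i) = \sum_x F x.
Proof. by rewrite -big_enum_val; apply: eq_bigl => x; rewrite inE. Qed.

Lemma addr_eq_self (V : zmodType) (a s : V) : a + s = a <-> s = 0.
Proof.
by split=> [/eqP|->]; [rewrite -subr_eq0 addrAC subrr add0r => /eqP | rewrite addr0].
Qed.

(** * Kemeny's constant and characteristic polynomials *)

Lemma char_poly_mulmxC (R : comNzRingType) p q (A : 'M[R]_(p, q)) (B : 'M[R]_(q, p)) :
  'X^q * char_poly (A *m B) = 'X^p * char_poly (B *m A).
Proof.
(* Two block eliminations of [M = [X, A; B, 1]], each of determinant [X^q],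
   compute [X^q * det M] as either side. *)
pose A' := map_mx polyC A; pose B' := map_mx polyC B.
pose M := block_mx ('X%:M : 'M_p) A' B' (1%:M : 'M_q).
have XB : ('X%:M : 'M_q) *m B' = B' *m 'X%:M.
  by rewrite !mul_scalar_mx mul_mx_scalar.
have detL : \det (block_mx (1%:M : 'M_p) (- A') 0 ('X%:M : 'M_q) *m M)
         = char_poly (A *m B) * 'X^q.
  rewrite /M mulmx_block !mul1mx !mul0mx !add0r mulmx1 mulNmx addrN.
  by rewrite det_lblock mulmx1 det_scalar /char_poly /char_poly_mx map_mxM.
have detR : \det (block_mx (1%:M : 'M_p) 0 (- B') ('X%:M : 'M_q) *m M)
         = 'X^p * char_poly (B *m A).
  rewrite /M mulmx_block !mul1mx !mul0mx !addr0 mulmx1 mulNmx.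
  rewrite XB addNr det_ublock det_scalar /char_poly /char_poly_mx map_mxM.
  by rewrite addrC -mulNmx.
rewrite det_mulmx det_ublock !det_scalar expr1n mul1r in detL.
rewrite det_mulmx det_lblock !det_scalar expr1n mul1r in detR.
by rewrite mulrC -detL detR.
Qed.

Lemma char_poly_eigenvalues n (P : 'M[algC]_n) :
  char_poly P = \prod_(r <- eigenvalues P) ('X - r%:P).
Proof.
rewrite /eigenvalues; case: closed_field_poly_normal => s /= ->.
by rewrite (monicP (char_poly_monic P)) scale1r.
Qed.

(* The copy of the eigenvalue 1 removed in [kemeny] contributes [(1 - 1)^-1 = 0]. *)
Lemma kemenyE n (P : 'M[algC]_n) : kemeny P = \sum_(r <- eigenvalues P) (1 - r)^-1.
Proof.
rewrite /kemeny; have [P1|] := boolP (1 \in eigenvalues P); last by move/rem_id->.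
by rewrite [in RHS](perm_big _ (perm_to_rem P1)) big_cons /= subrr invr0 add0r.
Qed.

Lemma kemeny_char_poly n (P : 'M[algC]_n) (s : seq algC) :
  char_poly P = \prod_(r <- s) ('X - r%:P) -> kemeny P = \sum_(r <- s) (1 - r)^-1.
Proof.
rewrite char_poly_eigenvalues kemenyE => /prod_XsubC_eq.
exact: perm_big.
Qed.

Lemma kemeny_mulmxC p q (A : 'M[algC]_(p, q)) (B : 'M_(q, p)) :
  kemeny (A *m B) + q%:R = kemeny (B *m A) + p%:R.
Proof.
have prod_nseq0 k : \prod_(r <- nseq k (0 : algC)) ('X - r%:P) = 'X^k.
  by rewrite big_nseq subr0 iter_mulr_1.
have sum_nseq0 k : \sum_(r <- nseq k (0 : algC)) (1 - r)^-1 = k%:R.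
  by rewrite big_nseq subr0 invr1 iter_addr_0.
have := char_poly_mulmxC A B.
rewrite !char_poly_eigenvalues -!prod_nseq0 -!big_cat => /prod_XsubC_eq spec.
have := perm_big (op := +%R) (x := 0) (P := predT) (F := fun r => (1 - r)^-1) _ spec.
by rewrite !big_cat /= !sum_nseq0 -!kemenyE addrC => ->; rewrite addrC.
Qed.

(** * Spectral decomposition of a normal matrix *)

Section NormalMatrix.
Variables (n : nat) (A : 'M[algC]_n).
Hypothesis A_normal : A \is normalmx.
Local Notation U := (spectralmx A).
Local Notation lambda := (spectral_diag A 0).

Lemma spectral_similar : A = invmx U *m diag_mx (spectral_diag A) *m U.
Proof. exact/orthomx_spectralP. Qed.

Lemma mxtrace_similar (M : 'M[algC]_n) : \tr (invmx U *m M *m U) = \tr M.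
Proof. by rewrite mxtrace_mulC mulmxA mulmxV ?spectral_unit // mul1mx. Qed.

Lemma char_poly_spectral : char_poly A = \prod_i ('X - (lambda i)%:P).
Proof.
have := char_poly_mulmxC (invmx U *m diag_mx (spectral_diag A)) U.
rewrite -spectral_similar mulmxA mulmxV ?spectral_unit // mul1mx.
move/mulfI => -> //; last by rewrite expf_neq0 // polyX_eq0.
rewrite char_poly_trig ?diag_mx_is_trig //.
by apply: eq_bigr => i _; rewrite mxE eqxx mulr1n.
Qed.

Lemma kemeny_spectral : kemeny A = \sum_i (1 - lambda i)^-1.
Proof.
rewrite (@kemeny_char_poly _ _ [seq lambda i | i <- index_enum 'I_n]) ?big_map //.
exact: char_poly_spectral.
Qed.

Lemma mxtrace_spectral : \tr A = \sum_i lambda i.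
Proof. by rewrite {1}spectral_similar mxtrace_similar mxtrace_diag. Qed.

Lemma mxtrace_sqr_spectral : \tr (A *m A) = \sum_i lambda i ^+ 2.
Proof.
have -> : A *m A = invmx U *m (diag_mx (spectral_diag A) *m diag_mx (spectral_diag A)) *m U.
  rewrite {1 2}spectral_similar -!mulmxA (mulmxA U (invmx U)).
  by rewrite mulmxV ?spectral_unit // mul1mx.
rewrite mxtrace_similar mulmx_diag mxtrace_diag.
by apply: eq_bigr => i _; rewrite mxE expr2.
Qed.

Lemma row_spectral_eigen i : row i U *m A = lambda i *: row i U.
Proof.
have UA : U *m A = diag_mx (spectral_diag A) *m U.
  by rewrite [X in U *m X]spectral_similar !mulmxA mulmxV ?spectral_unit // mul1mx.
by rewrite -row_mul UA mul_diag_mx; apply/rowP => j; rewrite !mxE.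
Qed.

Lemma row_spectral_dot i j : \sum_k U i k * (U j k)^* = (i == j)%:R.
Proof.
have /unitarymxP /matrixP /(_ i j) := spectral_unitarymx A.
by rewrite !mxE => <-; apply: eq_bigr => k _; rewrite !mxE.
Qed.

Lemma row_spectral_neq0 i : row i U != 0.
Proof.
apply/eqP => /rowP Ui0; have := row_spectral_dot i i.
rewrite eqxx big1 => [/eqP|k _]; first by rewrite eq_sym oner_eq0.
by have := Ui0 k; rewrite !mxE => ->; rewrite mul0r.
Qed.

Lemma spectral_diag_eigenvalue (v : 'rV_n) a :
  v *m A = a *: v -> v != 0 -> exists i, lambda i = a.
Proof.
move=> vA v0; have : root (char_poly A) a.
  by rewrite -eigenvalue_root_char; apply/eigenvalueP; exists v.
rewrite char_poly_spectral /root horner_prod => /prodf_eq0 [i _].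
by rewrite hornerXsubC subr_eq0 => /eqP ->; exists i.
Qed.

(* Two orthonormal rows of [U] in the eigenspace of [a] would have a nonzero
   combination vanishing at [k]. *)
Lemma spectral_diag_simple a k :
  (forall v : 'rV_n, v *m A = a *: v -> v 0 k = 0 -> v = 0) ->
  forall i j, lambda i = a -> lambda j = a -> i = j.
Proof.
move=> eigen_k i j li lj; apply/eqP/negPn/negP => nij.
pose z := U j k *: row i U - U i k *: row j U.
have zA : z *m A = a *: z.
  rewrite mulmxBl -!scalemxAl !row_spectral_eigen li lj !scalerA scalerBr !scalerA.
  by rewrite [a * U j k]mulrC [a * U i k]mulrC.
have z0 : z = 0 by apply: eigen_k zA _; rewrite !mxE mulrC subrr.
have Ujk0 : U j k = 0.
  have := congr1 (fun w : 'rV_n => \sum_l w 0 l * (U i l)^*) z0.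
  under eq_bigr do rewrite !mxE mulrBl -!mulrA.
  rewrite sumrB -!mulr_sumr !row_spectral_dot eqxx eq_sym (negPf nij).
  by rewrite mulr1 mulr0 subr0 => ->; rewrite big1 // => l _; rewrite mxE mul0r.
have Uj_eigen : row j U *m A = a *: row j U by rewrite row_spectral_eigen lj.
have := eigen_k _ Uj_eigen; rewrite mxE => /(_ Ujk0) /eqP.
by rewrite (negPf (row_spectral_neq0 j)).
Qed.

End NormalMatrix.

Lemma dirichlet_eigen (I : finType) (E : I -> I -> algC) (s u : I -> algC) (l : algC) :
  (forall i j, E i j = E j i) -> (forall i, s i != 0) -> (forall i, (s i)^* = s i) ->
  (forall i, \sum_j E i j = s i * s i) ->
  (forall j, \sum_i u i * E i j / (s i * s j) = l * u j) ->
  \sum_i \sum_j E i j * `|u i / s i - u j / s j| ^+ 2 = 2 * (1 - l) * \sum_i `|u i| ^+ 2.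
Proof.
move=> Esym s0 sC Erow Hu.
transitivity (\sum_i \sum_j E i j * ((u i / s i - u j / s j) * (u i / s i - u j / s j)^*)).
  by apply: eq_bigr => i _; apply: eq_bigr => j _; rewrite normCK.
transitivity (2 * (1 - l) * \sum_i u i * (u i)^*); last first.
  by congr (_ * _); apply: eq_bigr => i _; rewrite normCK.
pose y i := u i / s i.
have yC i : (y i)^* = (u i)^* / s i by rewrite /y rmorphM fmorphV /= sC.
have Ey j : \sum_i E i j * y i = l * u j * s j.
  rewrite -Hu mulr_suml; apply: eq_bigr => i _; rewrite /y.
  by field; apply/andP; split.
have diag_term : \sum_i \sum_j E i j * (y i * (y i)^*) = \sum_i u i * (u i)^*.
  apply: eq_bigr => i _; rewrite -mulr_suml Erow yC /y; field; exact: s0.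
have cross_term : \sum_i \sum_j E i j * (y i * (y j)^*) = l * \sum_i u i * (u i)^*.
  rewrite exchange_big /= mulr_sumr; apply: eq_bigr => j _.
  have -> : \sum_i E i j * (y i * (y j)^*) = (\sum_i E i j * y i) * (y j)^*.
    by rewrite mulr_suml; apply: eq_bigr => i _; ring.
  by rewrite Ey yC; field.
have swap (F : I -> I -> algC) : \sum_i \sum_j E i j * F j i = \sum_i \sum_j E i j * F i j.
  by rewrite exchange_big; apply: eq_bigr => i _; apply: eq_bigr => j _; rewrite Esym.
have -> : \sum_i \sum_j E i j * ((u i / s i - u j / s j) * (u i / s i - u j / s j)^*)
  = \sum_i \sum_j (E i j * (y i * (y i)^*) + E i j * (y j * (y j)^*)
                   - E i j * (y i * (y j)^*) - E i j * (y j * (y i)^*)).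
  apply: eq_bigr => i _; apply: eq_bigr => j _; rewrite rmorphB /= -/(y i) -/(y j); ring.
under eq_bigr do rewrite !sumrB big_split /=.
rewrite !sumrB big_split /= (swap (fun j i => y j * (y j)^*)) (swap (fun j i => y j * (y i)^*)).
rewrite diag_term cross_term; ring.
Qed.

Lemma set2_eq (T : finType) (x y u v : T) : x != y ->
  ([set x; y] == [set u; v]) = ((x, y) == (u, v)) || ((x, y) == (v, u)).
Proof.
move=> xy; apply/idP/idP => [/eqP xyE|]; last first.
  by case/orP => /eqP [-> ->] //; rewrite setUC.
move: (set21 x y) (set22 x y) xy; rewrite xyE !in_set2.
by move=> /orP[]/eqP-> /orP[]/eqP->; rewrite ?eqxx ?orbT.
Qed.

Lemma card_arc (T : finType) (e : rel T) : symmetric e -> irreflexive e ->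
  #|{: arc e}| = (2 * nedges e)%N.
Proof.
move=> e_sym e_irr; rewrite card_sig.
pose A : {set T * T} := [set p | e p.1 p.2].
pose ends (p : T * T) := [set p.1; p.2].
have -> : #|[pred p : T * T | e p.1 p.2]| = #|A| by apply: eq_card => p; rewrite !inE.
have -> : nedges e = #|ends @: A|.
  apply: eq_card => E; rewrite !inE; apply/existsP/imsetP.
    by case=> u /existsP [v /andP [uv /eqP ->]]; exists (u, v); rewrite ?inE.
  case=> [[u v]]; rewrite inE /= => uv ->; exists u; apply/existsP; exists v.
  by rewrite uv eqxx.
rewrite -sum1_card (partition_big_imset ends) /= mulnC -sum_nat_const.
apply: eq_bigr => E /imsetP [[u v]]; rewrite inE /= => uv ->.
have u_neq_v (x y : T) : e x y -> x != y by apply: contraTneq => ->; rewrite e_irr.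
have <- : #|[set (u, v); (v, u)]| = 2%N.
  by rewrite cards2 (_ : _ != _) //; apply: contraTneq uv => -[-> _]; rewrite e_irr.
rewrite sum1dep_card; apply: eq_card => [[x y]]; rewrite !inE /=.
have [xy|nxy] /= := boolP (e x y); first by rewrite set2_eq ?u_neq_v.
by symmetry; apply/negbTE; apply: contraNN nxy => /orP[]/eqP[-> ->]; rewrite // e_sym.
Qed.

Lemma connected_deg_gt0 (T : finType) (e : rel T) (u v : T) :
  irreflexive e -> connected_graph e -> e u v -> forall x, (0 < deg e x)%N.
Proof.
move=> e_irr e_conn uv x.
have [y yx /connectP [[|z p] /= xzp y_last]] : exists2 y, y != x & connect e x y.
  have [->|ux] := eqVneq x u; last by exists u; rewrite 1?eq_sym.
  by exists v => //; apply: contraTneq uv => ->; rewrite e_irr.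
  by rewrite y_last eqxx in yx.
by rewrite /deg card_gt0; apply/set0Pn; exists z; rewrite inE; case/andP: xzp.
Qed.

Lemma connected_const (T : finType) (e : rel T) (R : Type) (f : T -> R) :
  connected_graph e -> (forall x y, e x y -> f x = f y) -> forall x y, f x = f y.
Proof.
move=> e_conn f_edge x y; have /connectP [p xp ->] := e_conn x y.
by elim: p x xp => [|z p IH] x //= /andP [/f_edge -> /IH].
Qed.

(** * The normalized adjacency matrix of a graph *)

Section Graph.
Variables (T : finType) (e : rel T).
Hypotheses (e_sym : symmetric e) (e_irr : irreflexive e).
Hypothesis deg_gt0 : forall x, (0 < deg e x)%N.

Definition degC (x : T) : algC := (deg e x)%:R.
Definition sdeg (x : T) : algC := sqrtC (degC x).
Definition adjC (x y : T) : algC := (e x y)%:R.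

Definition nadj : 'M[algC]_#|T| :=
  \matrix_(i, j)
    (adjC (enum_val i) (enum_val j) / (sdeg (enum_val i) * sdeg (enum_val j))).

Definition arc_head_mx : 'M[algC]_(#|{: arc e}|, #|T|) :=
  \matrix_(a, i)
    (if (val (enum_val a : arc e)).2 == enum_val i then (sdeg (enum_val i))^-1 else 0).

Definition arc_tail_mx : 'M[algC]_(#|T|, #|{: arc e}|) :=
  \matrix_(i, b)
    (if (val (enum_val b : arc e)).1 == enum_val i then (sdeg (enum_val i))^-1 else 0).

(* Twice the general Randic index [R_{-1}] of the graph. *)
Definition randic : algC := \sum_x \sum_y adjC x y / (degC x * degC y).

Lemma degC_sum x : degC x = \sum_y adjC x y.
Proof.
rewrite /degC /deg -sum1_card natr_sum big_mkcond /=; apply: eq_bigr => y _.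
by rewrite inE /adjC; case: (e x y).
Qed.

Lemma degC_gt0 x : 0 < degC x.
Proof. by rewrite ltr0n. Qed.

Lemma degC_neq0 x : degC x != 0.
Proof. by rewrite gt_eqF ?degC_gt0. Qed.

Lemma sdeg_gt0 x : 0 < sdeg x.
Proof. by rewrite sqrtC_gt0 degC_gt0. Qed.

Lemma sdeg_neq0 x : sdeg x != 0.
Proof. by rewrite gt_eqF ?sdeg_gt0. Qed.

Lemma sdegK x : sdeg x * sdeg x = degC x.
Proof. by rewrite -expr2 sqrtCK. Qed.

Lemma conj_sdeg x : (sdeg x)^* = sdeg x.
Proof. exact/conj_Creal/gtr0_real/sdeg_gt0. Qed.

Lemma adjC_sym x y : adjC x y = adjC y x.
Proof. by rewrite /adjC e_sym. Qed.

Lemma conj_adjC x y : (adjC x y)^* = adjC x y.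
Proof. exact: rmorph_nat. Qed.

Lemma adjC_sqr x y : adjC x y ^+ 2 = adjC x y.
Proof. by rewrite /adjC; case: (e x y); rewrite ?expr1n ?expr0n. Qed.

Lemma adjC_ge0 x y : 0 <= adjC x y.
Proof. exact: ler0n. Qed.

Lemma arc_head_tail_mx : arc_head_mx *m arc_tail_mx = arc_walk e.
Proof.
apply/matrixP => a b; rewrite !mxE.
set a' := val (enum_val a : arc e); set b' := val (enum_val b : arc e).
under eq_bigr => j _ do rewrite !mxE.
rewrite (sum_enum_val (fun x => (if a'.2 == x then (sdeg x)^-1 else 0) *
                                (if b'.1 == x then (sdeg x)^-1 else 0))).
rewrite (bigD1 a'.2) //= big1 ?addr0; last first.
  by move=> x /negPf; rewrite eq_sym => ->; rewrite mul0r.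
rewrite eqxx eq_sym; case: (a'.2 == b'.1); last by rewrite mulr0.
by rewrite -invfM sdegK.
Qed.

Lemma arc_tail_head_mx : arc_tail_mx *m arc_head_mx = nadj.
Proof.
apply/matrixP => i j; rewrite !mxE.
under eq_bigr => b _ do rewrite !mxE.
rewrite (sum_enum_val (fun b : arc e =>
  (if (val b).1 == enum_val i then (sdeg (enum_val i))^-1 else 0) *
  (if (val b).2 == enum_val j then (sdeg (enum_val j))^-1 else 0))).
rewrite /adjC; have [ij|nij] := boolP (e (enum_val i) (enum_val j)).
  rewrite (bigD1 (exist _ (enum_val i, enum_val j) ij)) //= big1 ?addr0 ?eqxx ?mul1r ?invfM //.
  move=> b nb; case: eqP => b1; case: eqP => b2; rewrite ?mulr0 ?mul0r //.
  by case/negP: nb; apply/eqP/val_inj; rewrite /= -b1 -b2 -surjective_pairing.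
rewrite mul0r big1 // => [[[x y] xy]] _ /=.
case: eqP => xi; case: eqP => yj; rewrite ?mulr0 ?mul0r //.
by rewrite -xi -yj xy in nij.
Qed.

Lemma nadj_normal : nadj \is normalmx.
Proof.
have nadjC : (nadj ^t*)%sesqui = nadj.
  apply/matrixP => i j; rewrite !mxE rmorphM fmorphV rmorphM /=.
  by rewrite conj_adjC !conj_sdeg adjC_sym [sdeg (enum_val j) * _]mulrC.
by apply/normalmxP; rewrite nadjC.
Qed.

Lemma kemeny_e_nadj : kemeny_e e + #|T|%:R = kemeny nadj + (2 * nedges e)%:R.
Proof. by rewrite /kemeny_e -arc_head_tail_mx kemeny_mulmxC arc_tail_head_mx card_arc. Qed.


Local Notation lambda := (spectral_diag nadj 0).

Definition dirichlet_term (v : 'rV_#|T|) i j : algC :=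
  adjC (enum_val i) (enum_val j) *
  `|v 0 i / sdeg (enum_val i) - v 0 j / sdeg (enum_val j)| ^+ 2.

Lemma dirichlet_term_ge0 v i j : 0 <= dirichlet_term v i j.
Proof. by rewrite mulr_ge0 ?adjC_ge0 ?exprn_ge0. Qed.

Lemma nadj_dirichlet (v : 'rV_#|T|) a : v *m nadj = a *: v ->
  \sum_i \sum_j dirichlet_term v i j = 2 * (1 - a) * \sum_i `|v 0 i| ^+ 2.
Proof.
move=> /rowP va; apply: (@dirichlet_eigen _ (fun i j => adjC (enum_val i) (enum_val j))
                                         (fun i => sdeg (enum_val i))) => [i j|i|i|i|j].
- exact: adjC_sym.
- exact: sdeg_neq0.
- exact: conj_sdeg.
- by rewrite sdegK degC_sum -(sum_enum_val (adjC (enum_val i))).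
- by have := va j; rewrite !mxE => <-; apply: eq_bigr => i _; rewrite mxE mulrA.
Qed.

Lemma nadj_eigen_le1 (v : 'rV_#|T|) a : v *m nadj = a *: v -> v != 0 -> a <= 1.
Proof.
move=> va v0; rewrite -subr_ge0.
have norm_gt0 : 0 < \sum_i `|v 0 i| ^+ 2.
  rewrite lt_def sumr_ge0 ?andbT => [|i _]; last exact: exprn_ge0.
  apply: contra v0 => /eqP vnorm0; apply/eqP/rowP => i; rewrite mxE.
  by have /eqP := psumr_eq0P (fun i _ => exprn_ge0 2 (normr_ge0 (v 0 i))) vnorm0 (i := i) isT;
     rewrite sqrf_eq0 normr_eq0 => /eqP.
have : 0 <= 2 * (1 - a) * \sum_i `|v 0 i| ^+ 2.
  rewrite -(nadj_dirichlet va); apply: sumr_ge0 => i _; apply: sumr_ge0 => j _.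
  exact: dirichlet_term_ge0.
by rewrite mulrAC pmulr_rge0 // mulr_gt0.
Qed.

Lemma spectral_nadj_le1 i : lambda i <= 1.
Proof.
exact: nadj_eigen_le1 (row_spectral_eigen nadj_normal i) (row_spectral_neq0 nadj i).
Qed.

Lemma spectral_nadj_sum : \sum_i lambda i = 0.
Proof.
rewrite -mxtrace_spectral ?nadj_normal // /mxtrace big1 // => i _.
by rewrite mxE /adjC e_irr mul0r.
Qed.

Lemma spectral_nadj_sqr_sum : \sum_i lambda i ^+ 2 = randic.
Proof.
rewrite -mxtrace_sqr_spectral ?nadj_normal // /randic -sum_enum_val.
apply: eq_bigr => i _; rewrite -sum_enum_val mxE; apply: eq_bigr => j _.
rewrite !mxE [adjC (enum_val j) _]adjC_sym -!sdegK.
rewrite -[in RHS]adjC_sqr.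
by field; rewrite !sdeg_neq0.
Qed.

Definition sdeg_row (f : T -> algC) : 'rV[algC]_#|T| :=
  \row_i (f (enum_val i) * sdeg (enum_val i)).

Lemma sdeg_row_eigen (f : T -> algC) a : (forall x y, e x y -> f x = a * f y) ->
  sdeg_row f *m nadj = a *: sdeg_row f.
Proof.
move=> f_edge; apply/rowP => j; rewrite !mxE; under eq_bigr do rewrite !mxE.
set y := enum_val j.
rewrite (sum_enum_val (fun x => f x * sdeg x * (adjC x y / (sdeg x * sdeg y)))).
transitivity (a * f y / sdeg y * \sum_x adjC y x); last first.
  by rewrite -degC_sum -sdegK; field; rewrite sdeg_neq0.
rewrite mulr_sumr; apply: eq_bigr => x _; rewrite [adjC x y]adjC_sym /adjC.
case: (boolP (e y x)) => [yx|_]; last by rewrite !(mul0r, mulr0).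
by rewrite e_sym in yx; rewrite (f_edge _ _ yx); field; rewrite !sdeg_neq0.
Qed.

Lemma spectral_nadj_eigen_sdeg (f : T -> algC) a x0 :
  (forall x y, e x y -> f x = a * f y) -> f x0 != 0 -> exists i, lambda i = a.
Proof.
move=> /sdeg_row_eigen v_eigen fx0.
apply: (spectral_diag_eigenvalue nadj_normal v_eigen).
apply/eqP => /rowP /(_ (enum_rank x0)); rewrite !mxE enum_rankK => /eqP.
by rewrite mulf_eq0 (negPf fx0) (negPf (sdeg_neq0 x0)).
Qed.

Definition vol : algC := \sum_x degC x.

Lemma vol_gt0 (x0 : T) : 0 < vol.
Proof.
rewrite /vol (bigD1 x0) //= ltr_wpDr ?degC_gt0 //.
by apply: sumr_ge0 => x _; apply: ltW; apply: degC_gt0.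
Qed.

Section Coloring.
Variable c : T -> bool.
Hypothesis c_proper : forall x y, e x y -> c x != c y.

Local Notation sg x := ((-1) ^+ c x : algC).

Lemma adjC_sg x y : adjC x y * sg x = - (adjC x y * sg y).
Proof.
rewrite /adjC; case: (boolP (e x y)) => [/c_proper|_]; last by rewrite !mul0r oppr0.
by case: (c x); case: (c y); rewrite //= !mul1r ?expr0 ?expr1 ?opprK.
Qed.

Lemma sg_degC_sum : \sum_x sg x * degC x = 0.
Proof.
set X := \sum_x _; suff: X *+ 2 == 0 by rewrite mulrn_eq0 => /eqP.
have -> : X = \sum_x \sum_y adjC x y * sg x.
  by apply: eq_bigr => x _; rewrite degC_sum mulr_sumr; apply: eq_bigr => y _; rewrite mulrC.
rewrite mulr2n {1}exchange_big /= -big_split big1 //= => y _.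
rewrite -big_split big1 //= => x _.
by rewrite adjC_sym adjC_sg addrN.
Qed.

Lemma sg_eigenvalue (x0 : T) : exists i, lambda i = -1.
Proof.
apply: (@spectral_nadj_eigen_sdeg (fun x => sg x) _ x0); last by rewrite signr_eq0.
move=> x y /c_proper; rewrite mulN1r.
by case: (c x); case: (c y); rewrite //= ?expr0 ?expr1 ?opprK.
Qed.

(* Across the parts of a complete bipartite graph with part sizes [n0, n1],
   [(1 - sg x * sg y) / vol = 2 / (2 n0 n1)] is the value of the first term. *)
Definition randic_defect (x y : T) : algC :=
  adjC x y / (degC x * degC y) - (1 - sg x * sg y) / vol.

Lemma randic_defect_sos (x0 : T) :
  \sum_x \sum_y degC x * degC y * randic_defect x y ^+ 2 = randic - 2.
Proof.
have vol0 : vol != 0 by rewrite gt_eqF ?(vol_gt0 x0).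
have term x y : degC x * degC y * randic_defect x y ^+ 2 =
    adjC x y / (degC x * degC y) - 4 / vol * adjC x y + 2 / vol ^+ 2 * (degC x * degC y)
    - 2 / vol ^+ 2 * ((sg x * degC x) * (sg y * degC y)).
  have dx := degC_neq0 x; have dy := degC_neq0 y.
  rewrite /randic_defect /adjC; case: (boolP (e x y)) => [/c_proper|_].
    by case: (c x); case: (c y); rewrite //= ?expr0 ?expr1 => _; field; rewrite ?dx ?dy ?vol0.
  by case: (c x); case: (c y); rewrite /= ?expr0 ?expr1; field; rewrite ?dx ?dy ?vol0.
have sum_mul k (F G : T -> algC) :
    \sum_x \sum_y k * (F x * G y) = k * ((\sum_x F x) * (\sum_y G y)).
  by rewrite big_distrlr mulr_sumr; apply: eq_bigr => x _; rewrite mulr_sumr.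
under eq_bigr do under eq_bigr do rewrite term.
under eq_bigr do rewrite !(sumrB, big_split) /=.
rewrite !(sumrB, big_split) /= (sum_mul _ degC degC).
rewrite (sum_mul _ (fun x => sg x * degC x) (fun y => sg y * degC y)).
rewrite sg_degC_sum -/vol -/randic.
have -> : \sum_x \sum_y 4 / vol * adjC x y = 4 / vol * vol.
  by rewrite /vol mulr_sumr; apply: eq_bigr => x _; rewrite degC_sum mulr_sumr.
by field.
Qed.

Lemma randic_defect_real x y : randic_defect x y \is Num.real.
Proof.
have sg_real z : sg z \is Num.real by rewrite rpredX ?rpredN ?rpred1.
rewrite /randic_defect; apply: rpredB; apply: rpredM.
- exact: realn.
- by rewrite realV rpredM ?realn.
- by rewrite rpredB ?rpred1 ?rpredM.
- by rewrite realV rpred_sum // => z _; apply: realn.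
Qed.

Lemma randic_eq2_complete (x0 : T) : randic = 2 -> forall x y, e x y = (c x != c y).
Proof.
move=> randic2 x y; have [cxy|cxy] /= := eqVneq (c x) (c y).
  by apply/negbTE/negP => /c_proper; rewrite cxy eqxx.
have term_ge0 x' y' : 0 <= degC x' * degC y' * randic_defect x' y' ^+ 2.
  apply: mulr_ge0; first by apply: mulr_ge0; apply: ltW; apply: degC_gt0.
  by rewrite -realEsqr randic_defect_real.
have := randic_defect_sos x0; rewrite randic2 subrr => sos0.
have sos_x := psumr_eq0P (fun x' _ => sumr_ge0 _ (fun y' _ => term_ge0 x' y')) sos0 (i := x) isT.
have /eqP := psumr_eq0P (fun y' _ => term_ge0 x y') sos_x (i := y) isT.
rewrite mulf_eq0 sqrf_eq0 mulf_eq0 !(negPf (degC_neq0 _)) /= /randic_defect subr_eq0 /adjC.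
have -> : sg x * sg y = -1.
  by move: cxy; case: (c x); case: (c y); rewrite //= ?expr0 ?expr1 ?mul1r ?mulr1.
case: (e x y) => //= /eqP; rewrite mul0r opprK -mulr2n => /esym/eqP.
by rewrite mulf_eq0 invr_eq0 (gt_eqF (vol_gt0 x0)) pnatr_eq0.
Qed.

End Coloring.

Lemma randic_complete (c : T -> bool) (x0 : T) :
  (forall x y, e x y = (c x != c y)) -> randic = 2.
Proof.
move=> e_c; have c_proper x y : e x y -> c x != c y by rewrite e_c.
pose n b : algC := \sum_y (c y == b)%:R.
have deg_n x : degC x = n (~~ c x).
  by rewrite degC_sum; apply: eq_bigr => y _; rewrite /adjC e_c; case: (c x); case: (c y).
have vol_n : vol = 2 * (n true * n false).
  transitivity (\sum_x ((c x == true)%:R * n false + (c x == false)%:R * n true)).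
    by apply: eq_bigr => x _; rewrite deg_n; case: (c x); rewrite /= ?mul1r ?mul0r ?addr0 ?add0r.
  by rewrite big_split /= -!mulr_suml mulr2n mulrDl mul1r [n false * _]mulrC.
have := randic_defect_sos c_proper x0; rewrite big1 => [/esym/eqP|x _].
  by rewrite subr_eq0 => /eqP.
rewrite big1 // => y _; suff -> : randic_defect c x y = 0 by rewrite expr0n /= mulr0.
have dx := degC_neq0 x; have dy := degC_neq0 y; rewrite !deg_n in dx dy.
rewrite /randic_defect /adjC e_c !deg_n vol_n.
move: dx dy; case: (c x); case: (c y) => /= dx dy; rewrite ?expr0 ?expr1 ?mulN1r ?opprK.
- by rewrite subrr !mul0r subrr.
- by field; rewrite dx dy.
- by field; rewrite dx dy.
- by rewrite mulr1 subrr !mul0r subrr.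
Qed.

Section Connected.
Hypothesis e_conn : connected_graph e.

Lemma nadj_fixed_eq0 (v : 'rV_#|T|) k : v *m nadj = v -> v 0 k = 0 -> v = 0.
Proof.
move=> v_fixed vk0.
pose w x := v 0 (enum_rank x) / sdeg x.
have w_edge x y : e x y -> w x = w y.
  have v_eigen1 : v *m nadj = 1 *: v by rewrite scale1r.
  have := nadj_dirichlet v_eigen1; rewrite subrr mulr0 mul0r => dir0 xy.
  have dir_x := psumr_eq0P (fun i _ => sumr_ge0 _ (fun j _ => dirichlet_term_ge0 v i j))
    dir0 (i := enum_rank x) isT.
  have /eqP := psumr_eq0P (fun j _ => dirichlet_term_ge0 v _ j) dir_x (i := enum_rank y) isT.
  rewrite /dirichlet_term !enum_rankK /adjC xy mul1r sqrf_eq0 normr_eq0 subr_eq0.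
  by move/eqP.
apply/rowP => i; rewrite mxE.
have := connected_const e_conn w_edge (enum_val i) (enum_val k).
rewrite /w !enum_valK vk0 mul0r.
by move/eqP; rewrite mulf_eq0 invr_eq0 (negPf (sdeg_neq0 _)) orbF => /eqP.
Qed.

Lemma spectral_nadj_eq1_inj i j : lambda i = 1 -> lambda j = 1 -> i = j.
Proof.
apply: (spectral_diag_simple nadj_normal (k := i)) => v.
by rewrite scale1r; exact: nadj_fixed_eq0.
Qed.

Lemma spectral_nadj_has1 (x0 : T) : exists i, lambda i = 1.
Proof.
apply: (@spectral_nadj_eigen_sdeg (fun=> 1) _ x0) => [x y _|]; first by rewrite mulr1.
exact: oner_neq0.
Qed.

Definition nadj_excess : algC := \sum_i lambda i ^+ 2 / (1 - lambda i).

Lemma kemeny_e_excess (x0 : T) :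
  kemeny_e e = (2 * nedges e)%:R - 2 + nadj_excess.
Proof.
have [i1 l1] := spectral_nadj_has1 x0.
have inv_expand i : (1 - lambda i)^-1
    = 1 + lambda i + lambda i ^+ 2 / (1 - lambda i) - (i == i1)%:R *+ 2.
  (* at [i1] both sides vanish, the left one because [0^-1 = 0] *)
  have [->|ni] := eqVneq i i1; first by rewrite l1 subrr invr0 mulr0 addr0 subrr.
  have : 1 - lambda i != 0.
    by rewrite subr_eq0 eq_sym; apply: contra_neq ni => /spectral_nadj_eq1_inj; apply.
  by rewrite mulr0n mul0rn subr0 => ?; field.
have count_i1 : \sum_i (i == i1)%:R = 1 :> algC.
  by rewrite (bigD1 i1) //= eqxx big1 ?addr0 // => i /negPf->.
have := kemeny_e_nadj; rewrite kemeny_spectral ?nadj_normal //.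
rewrite (eq_bigr _ (fun i _ => inv_expand i)) sumrB !big_split /= spectral_nadj_sum.
rewrite count_i1 sumr_const card_ord -/nadj_excess => kemE.
by apply: (addIr #|T|%:R); rewrite kemE; ring.
Qed.

Lemma nadj_excess_bipartite (c : T -> bool) (x0 : T) :
    (forall x y, e x y -> c x != c y) ->
  2^-1 <= nadj_excess /\ (nadj_excess = 2^-1 <-> randic = 2).
Proof.
move=> c_proper; have [i1 l1] := spectral_nadj_has1 x0.
have [i0 l0] := sg_eigenvalue c_proper x0.
have i01 : i0 != i1.
  apply: contra_eq_neq l0 => ->; rewrite l1 -subr_eq0 opprK -mulr2n.
  by rewrite pnatr_eq0.
pose P i := (i != i0) && (i != i1).
have lt1 i : P i -> lambda i < 1.
  case/andP=> _ ni1; rewrite lt_def spectral_nadj_le1 andbT eq_sym.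
  by apply: contra_neq ni1 => /spectral_nadj_eq1_inj; apply.
have excessE : nadj_excess = 2^-1 + \sum_(i | P i) lambda i ^+ 2 / (1 - lambda i).
  rewrite /nadj_excess (bigD1 i0) //= (bigD1 i1) 1?eq_sym //= l0 l1 subrr invr0 mulr0.
  by rewrite add0r sqrrN expr1n opprK mul1r.
have randicE : randic = 2 + \sum_(i | P i) lambda i ^+ 2.
  rewrite -spectral_nadj_sqr_sum (bigD1 i0) //= (bigD1 i1) 1?eq_sym //= l0 l1.
  by rewrite sqrrN !expr1n addrA.
have sqr_ge0 i : P i -> 0 <= lambda i ^+ 2.
  by move/lt1/ltW/ler1_real; rewrite realEsqr.
have term_ge0 i : P i -> 0 <= lambda i ^+ 2 / (1 - lambda i).
  by move=> Pi; rewrite mulr_ge0 ?sqr_ge0 // invr_ge0 subr_ge0 ltW ?lt1.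
split; first by rewrite excessE lerDl sumr_ge0.
rewrite excessE randicE !addr_eq_self.
split => /psumr_eq0P sum0; apply: big1 => i Pi.
- have /eqP := sum0 term_ge0 i Pi.
  by rewrite mulf_eq0 invr_eq0 subr_eq0 (gt_eqF (lt1 i Pi)) orbF => /eqP.
- by have -> := sum0 sqr_ge0 i Pi; rewrite mul0r.
Qed.

End Connected.
End Graph.

Theorem lemma4p3 (T : finType) (e : rel T) :
  simple_graph e -> connected_graph e -> bipartite e -> (0 < nedges e)%N ->
  (2 * (nedges e)%:R - 3 / 2 <= kemeny_e e) /\
  (kemeny_e e = 2 * (nedges e)%:R - 3 / 2 <-> complete_bipartite e).
Proof.
move=> [e_sym e_irr] e_conn [c c_proper] m_gt0.
have [u [v uv]] : exists u v, e u v.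
  move: m_gt0; rewrite card_gt0 => /set0Pn [E]; rewrite inE.
  by case/existsP => u /existsP [v /andP [uv _]]; exists u, v.
have deg_gt0 := connected_deg_gt0 e_irr e_conn uv.
have [excess_ge excess_eq] := nadj_excess_bipartite e_sym deg_gt0 e_conn u c_proper.
have -> : kemeny_e e = 2 * (nedges e)%:R - 3 / 2 + (nadj_excess e - 2^-1).
  by rewrite (kemeny_e_excess e_sym e_irr deg_gt0 e_conn u) natrM; field.
rewrite lerDl subr_ge0 addr_eq_self (rwP eqP) subr_eq0 -(rwP eqP) excess_eq.
split => //.
split => [/(randic_eq2_complete e_sym deg_gt0 c_proper u) e_c|[c' e_c']].
  by exists c.
exact: (randic_complete e_sym deg_gt0 u e_c').
Qed.
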